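(* Let $k \geq 1$ be a finite integer. The consensus number of the atomic $k$-sliding read/write register type is less than $k+1$; that is, there is no wait-free algorithm implementing consensus among $k+1$ crash-prone asynchronous processes that communicate through atomic read/write registers and any number of atomic $k$-sliding read/write registers.
   Context: System model: $n$ sequential asynchronous processes $p_1,\dots,p_n$ communicating through shared atomic objects; any number of processes may crash (halt prematurely, never recovering); implementations must be wait-free (every operation invoked by a non-crashed process terminates regardless of the behavior of the others). A consensus object provides a single operation $\mathrm{propose}(v)$, invoked at most once per process and returning a value, satisfying: Validity (a decided value was proposed by some process), Agreement (no two processes decide different values), Termination (every correct process that invokes $\mathrm{propose}()$ decides). The consensus number of an object type $T$ is the largest $n$ such that consensus can be wait-free implemented among $n$ processes using atomic read/write registers and objects of type $T$ ($+\infty$ if no such finite $n$ exists). An atomic $k$-sliding read/write register is a shared object whose state is a sequence of values (initially empty), with two atomic (linearizable) operations: $\mathrm{write}(v)$ appends $v$ to the end of the sequence, and $\mathrm{read}()$ returns the ordered sequence of the last $k$ values written before it in the linearization order, where if only $x<k$ values have been written the $k-x$ missing values are replaced by a default value $\bot$. *)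

From mathcomp Require Import all_boot.
Set Implicit Arguments. Unset Strict Implicit. Unset Printing Implicit Defensive.

(* Values stored in objects range over an arbitrary type Val; the default
   value bottom is represented by None : option Val. *)

Inductive action (Obj Val Inp : Type) : Type :=
  | ARead   of Obj
  | AWrite  of Obj & Val
  | ADecide of Inp.

(* A deterministic protocol for n processes, proposal values in Inp, using
   plain registers and k-sliding registers.  [sliding o] = true means that
   object o is a k-sliding register; otherwise it is a plain register with
   initial value [init o].  Each process starts in state [start i v] when it
   invokes propose(v); [act i s] is the next operation of process i in local
   state s, and [trans i s r] is the new local state after the operation
   returns r (the sequence read, or [::] for a write). *)
Record protocol (n : nat) (Inp : Type) : Type := Protocol {
  Val : Type;
  Obj : eqType;
  St  : Type;
  sliding : Obj -> bool;
  init : Obj -> Val;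
  start : 'I_n -> Inp -> St;
  act : 'I_n -> St -> action Obj Val Inp;
  trans : 'I_n -> St -> seq (option Val) -> St
}.

Section Semantics.
Variables (k n : nat) (Inp : Type) (P : protocol n Inp).

(* Global configuration: local states and, for each object, the sequence of
   values written into it so far (most recent first). *)
Record config : Type := Config {
  cst : 'I_n -> St P;
  cmem : Obj P -> seq (Val P)
}.

(* k-sliding read: the last k values written, in order (oldest first),
   missing values replaced by bottom (None). *)
Definition sliding_read (h : seq (Val P)) : seq (option (Val P)) :=
  rev (mkseq (fun j => nth None (map Some h) j) k).

Definition read_obj (o : Obj P) (h : seq (Val P)) : seq (option (Val P)) :=
  if sliding o then sliding_read h else [:: Some (head (init o) h)].

Definition upd_st (c : config) (i : 'I_n) (s : St P) : 'I_n -> St P :=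
  fun j => if j == i then s else cst c j.

(* One atomic step of process i (a no-op once i has decided). *)
Definition step (c : config) (i : 'I_n) : config :=
  let s := cst c i in
  match act i s with
  | ARead o => Config (upd_st c i (trans i s (read_obj o (cmem c o)))) (cmem c)
  | AWrite o v =>
      Config (upd_st c i (trans i s [::]))
             (fun o' => if o' == o then v :: cmem c o' else cmem c o')
  | ADecide _ => c
  end.

Definition init_config (inp : 'I_n -> Inp) : config :=
  Config (fun i => start P i (inp i)) (fun _ => [::]).

(* The configuration after t steps of the schedule sched, where every
   process i has invoked propose(inp i).  A process that crashes is simply
   scheduled only finitely often. *)
Fixpoint exec (inp : 'I_n -> Inp) (sched : nat -> 'I_n) (t : nat) : config :=
  match t with
  | 0 => init_config inp
  | t'.+1 => step (exec inp sched t') (sched t')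
  end.

Definition decision (c : config) (i : 'I_n) : option Inp :=
  match act i (cst c i) with ADecide d => Some d | _ => None end.

Definition wf_consensus : Prop :=
  forall (inp : 'I_n -> Inp) (sched : nat -> 'I_n),
    (forall t1 t2 i j d1 d2,
        decision (exec inp sched t1) i = Some d1 ->
        decision (exec inp sched t2) j = Some d2 -> d1 = d2) /\
    (forall t i d, decision (exec inp sched t) i = Some d ->
        exists j, inp j = d) /\
    (forall i, (forall t, exists t', t <= t' /\ sched t' = i) ->
        exists t, decision (exec inp sched t) i <> None).
End Semantics.

From mathcomp Require Import all_boot.
From Stdlib Require Import Classical ClassicalEpsilon.
Set Implicit Arguments. Unset Strict Implicit. Unset Printing Implicit Defensive.

(* The valence argument.  Flipping the inputs one process at a time yields a
   bivalent initial configuration, and wait-freedom yields a reachable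
   critical configuration c: bivalent, but univalent after any single step.
   Two processes i and j whose steps from c lead to different decisions must
   both be about to write the same k-sliding register, since a read, writes
   to different objects, or an overwritten plain register would be invisible
   to a process that then decides alone; by the same token every process is
   about to write that register.  If i writes and then the k other processes
   write, i's value has left the window of every read, so the result looks,
   to everyone but i, like the configuration where only the k others wrote,
   although the two have different valences. *)

#[local] Arguments ARead {Obj Val Inp}.
#[local] Arguments AWrite {Obj Val Inp}.

Lemma exists_boundary (Q : nat -> Prop) m :
  Q 0 -> ~ Q m -> exists2 j, j < m & Q j /\ ~ Q j.+1.
Proof.
elim: m => [//|m IH] Q0 nQm.
have [Qm|nQm'] := classic (Q m); first by exists m.
by have [j jm Qj] := IH Q0 nQm'; exists j => //; apply: ltnW.
Qed.

Lemma infinitely_often (T : finType) (g : nat -> T) :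
  exists z, forall t, exists t', t <= t' /\ g t' = z.
Proof.
apply: NNPP => none.
have bounded z : exists B, forall t, B <= t -> g t <> z.
  apply: NNPP => unbounded; apply: none; exists z => t.
  by apply: NNPP => late; apply: unbounded; exists t => t' tt' gt'; apply: late; exists t'.
have [B hB] := fin_all_exists bounded.
exact: (hB (g (\max_z B z)) _ (leq_bigmax _)).
Qed.

Lemma exists_neq n (x : 'I_n) : 1 < n -> exists z : 'I_n, z != x.
Proof.
rewrite -[n in 1 < n]card_ord => /card_gt1P[y1 [y2 [_ _ y12]]].
by case: (eqVneq y1 x) => [<-|]; [exists y2; rewrite eq_sym | exists y1].
Qed.

Section Protocol.
Variables (k n : nat) (Inp : Type) (P : protocol n Inp).
Local Notation config := (config P).
Local Notation step := (@step k n Inp P).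
Local Notation read_obj := (@read_obj k n Inp P).
Local Notation c0 := (init_config P).

Definition run (c : config) (s : seq 'I_n) : config := foldl step c s.

Lemma run_cat c s1 s2 : run c (s1 ++ s2) = run (run c s1) s2.
Proof. exact: foldl_cat. Qed.

Lemma run_rcons c s x : run c (rcons s x) = step (run c s) x.
Proof. exact: foldl_rcons. Qed.

Lemma exec_run inp sched t : exec k P inp sched t = run (c0 inp) (mkseq sched t).
Proof. by elim: t => [|t IH] //; rewrite mkseqS run_rcons -IH. Qed.

Definition sched_then (q : seq 'I_n) (f : nat -> 'I_n) (t : nat) : 'I_n :=
  if t < size q then nth (f 0) q t else f (t - size q).

Lemma exec_sched_then inp q f u :
  exec k P inp (sched_then q f) (size q + u) = run (c0 inp) (q ++ mkseq f u).
Proof.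
rewrite exec_run; congr run.
apply: (@eq_from_nth _ (f 0)) => [|t]; first by rewrite size_cat !size_mkseq.
rewrite size_mkseq => tu; rewrite nth_mkseq // nth_cat /sched_then.
by case: ifP => // /negbT; rewrite -leqNgt => qt; rewrite nth_mkseq // ltn_subLR.
Qed.

Lemma cst_step_neq c x y : y != x -> cst (step c x) y = cst c y.
Proof.
by move=> yx; rewrite /step; case: act => * //=; rewrite /upd_st (negbTE yx).
Qed.

Lemma cst_step_write c x o v : act x (cst c x) = AWrite o v ->
  cst (step c x) x = trans x (cst c x) [::].
Proof. by move=> Ex; rewrite /step Ex /= /upd_st eqxx. Qed.

Lemma cmem_step_write c x o v o' : act x (cst c x) = AWrite o v ->
  cmem (step c x) o' = if o' == o then v :: cmem c o' else cmem c o'.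
Proof. by move=> Ex; rewrite /step Ex. Qed.

Lemma decision_step c x y d : decision c x = Some d -> decision (step c y) x = Some d.
Proof.
have [<-|xy] := eqVneq x y; last by rewrite /decision cst_step_neq.
by rewrite /decision /step; case E: act => //; rewrite E.
Qed.

Lemma decision_exec_le inp sched t t' x d : t <= t' ->
  decision (exec k P inp sched t) x = Some d -> decision (exec k P inp sched t') x = Some d.
Proof.
move/subnKC <-; elim: (t' - t) => [|u IH]; first by rewrite addn0.
by move/IH; rewrite addnS; apply: decision_step.
Qed.

Definition indist (X : pred 'I_n) (c1 c2 : config) :=
  (forall x, ~~ X x -> cst c1 x = cst c2 x) /\
  forall o, read_obj o (cmem c1 o) = read_obj o (cmem c2 o).

Lemma eq_sliding_read (h1 h2 : seq (Val P)) :
  sliding_read k h1 = sliding_read k h2 <->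
  forall j, j < k -> nth None (map Some h1) j = nth None (map Some h2) j.
Proof.
rewrite /sliding_read; split=> [/(congr1 rev)|eqh]; last first.
  congr rev; apply: (@eq_from_nth _ None); rewrite !size_mkseq // => j jk.
  by rewrite !nth_mkseq // eqh.
by rewrite !revK => eqh j jk; have := congr1 (nth None ^~ j) eqh; rewrite !nth_mkseq.
Qed.

Lemma read_obj_cons o h1 h2 v :
  read_obj o h1 = read_obj o h2 -> read_obj o (v :: h1) = read_obj o (v :: h2).
Proof.
rewrite /read_obj; case: sliding => // /eq_sliding_read eqh.
by apply/eq_sliding_read => -[|j] jk //=; apply/eqh/ltnW.
Qed.

Lemma read_obj_cat_sliding o (A h1 h2 : seq (Val P)) : sliding o -> k <= size A ->
  read_obj o (A ++ h1) = read_obj o (A ++ h2).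
Proof.
move=> so kA; rewrite /read_obj so; apply/eq_sliding_read => j jk.
by rewrite !map_cat !nth_cat size_map (leq_trans jk kA).
Qed.

Lemma indist_init X inp1 inp2 : (forall x, ~~ X x -> inp1 x = inp2 x) ->
  indist X (c0 inp1) (c0 inp2).
Proof. by move=> eq_inp; split=> // x /eq_inp /= ->. Qed.

Lemma indist_step X c1 c2 x : indist X c1 c2 -> ~~ X x -> indist X (step c1 x) (step c2 x).
Proof.
move=> [eq_st eq_rd] Xx; rewrite /step (eq_st x Xx).
case: act => [o|o v|d] //; split=> [y Xy|o'] /=; rewrite /upd_st.
- by case: ifP; rewrite ?eq_rd ?eq_st.
- exact: eq_rd.
- by case: ifP; rewrite ?eq_st.
- by case: ifP => _; [apply: read_obj_cons|]; apply: eq_rd.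
Qed.

Lemma indist_run X c1 c2 s : indist X c1 c2 -> all (predC X) s ->
  indist X (run c1 s) (run c2 s).
Proof.
by elim: s c1 c2 => [|x s IH] c1 c2 //= eqc /andP[Xx Xs]; apply/IH/Xs/indist_step.
Qed.

Lemma indist_decision X c1 c2 z : indist X c1 c2 -> ~~ X z ->
  decision c1 z = decision c2 z.
Proof. by move=> [eq_st _] Xz; rewrite /decision eq_st. Qed.

Lemma indist_step_read c x o : act x (cst c x) = ARead o -> indist (pred1 x) (step c x) c.
Proof. by move=> Ex; rewrite /step Ex; split=> //= y /negbTE yx; rewrite /upd_st yx. Qed.

Lemma indist_write_comm c x y ox oy vx vy : x != y -> ox != oy ->
  act x (cst c x) = AWrite ox vx -> act y (cst c y) = AWrite oy vy ->
  indist pred0 (run c [:: x; y]) (run c [:: y; x]).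
Proof.
move=> xy oxy Ex Ey.
have Ey' : act y (cst (step c x) y) = AWrite oy vy by rewrite cst_step_neq // eq_sym.
have Ex' : act x (cst (step c y) x) = AWrite ox vx by rewrite cst_step_neq.
split=> [z _|o] /=.
  have yx : y != x by rewrite eq_sym.
  have [-> | zx] := eqVneq z x.
    rewrite (cst_step_write Ex') (@cst_step_neq _ y x) //.
    by rewrite (cst_step_neq _ xy) (cst_step_write Ex).
  have [-> | zy] := eqVneq z y.
    rewrite (cst_step_write Ey') (@cst_step_neq _ x y) //.
    by rewrite (cst_step_neq _ yx) (cst_step_write Ey).
  by rewrite !cst_step_neq.
rewrite (cmem_step_write _ Ey') (cmem_step_write _ Ex').
rewrite !(cmem_step_write _ Ex) !(cmem_step_write _ Ey).
by have [-> | //] := eqVneq o ox; rewrite (negbTE oxy).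
Qed.

Lemma indist_overwrite c x y o vx vy : x != y -> ~~ sliding o ->
  act x (cst c x) = AWrite o vx -> act y (cst c y) = AWrite o vy ->
  indist (pred1 x) (run c [:: x; y]) (run c [:: y]).
Proof.
move=> xy so Ex Ey.
have Ey' : act y (cst (step c x) y) = AWrite o vy by rewrite cst_step_neq // eq_sym.
split=> [z zx|o'] /=.
  have [-> | zy] := eqVneq z y; last by rewrite !cst_step_neq.
  by rewrite !(cst_step_write Ey') (cst_step_write Ey) cst_step_neq // eq_sym.
rewrite (cmem_step_write _ Ey') (cmem_step_write _ Ex) (cmem_step_write _ Ey).
by case: eqP => [->|]; rewrite ?eqxx // /read_obj (negbTE so).
Qed.

Lemma run_writes c o (w : 'I_n -> Val P) L : uniq L ->
  (forall x, x \in L -> act x (cst c x) = AWrite o (w x)) ->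
  (forall y, cst (run c L) y = if y \in L then trans y (cst c y) [::] else cst c y) /\
  (forall o', cmem (run c L) o' =
              if o' == o then rev (map w L) ++ cmem c o' else cmem c o').
Proof.
elim/last_ind: L => [|L x IH]; first by split=> // o'; case: eqP.
rewrite rcons_uniq => /andP[xL uL] EL.
have EL' y : y \in L -> act y (cst c y) = AWrite o (w y).
  by move=> yL; apply: EL; rewrite mem_rcons in_cons yL orbT.
have [cst_L cmem_L] := IH uL EL'.
have Ex : act x (cst (run c L) x) = AWrite o (w x).
  by rewrite cst_L (negbTE xL); apply/EL; rewrite mem_rcons mem_head.
rewrite run_rcons; split=> [y|o'].
  rewrite mem_rcons in_cons; have [-> | yx] := eqVneq y x.
    by rewrite (cst_step_write Ex) cst_L (negbTE xL).
  by rewrite cst_step_neq // cst_L.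
rewrite (cmem_step_write _ Ex) cmem_L map_rcons rev_rcons.
by case: eqP.
Qed.

Lemma indist_hidden_write c o (w : 'I_n -> Val P) x L :
  sliding o -> uniq L -> x \notin L -> k <= size L ->
  (forall y, act y (cst c y) = AWrite o (w y)) ->
  indist (pred1 x) (run c (x :: L)) (run c L).
Proof.
move=> so uL xL kL Ew.
have Ew' y : y \in L -> act y (cst (step c x) y) = AWrite o (w y).
  by move=> yL; rewrite cst_step_neq ?Ew //; apply: contraNneq xL => <-.
have [cst1 cmem1] := run_writes uL Ew'.
have [cst2 cmem2] := run_writes uL (fun y _ => Ew y).
split=> [y yx|o'] /=; first by rewrite cst1 cst2 cst_step_neq.
rewrite cmem1 cmem2 (cmem_step_write _ (Ew x)).
case: eqP => [->|//]; apply: read_obj_cat_sliding => //.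
by rewrite size_rev size_map.
Qed.

Section WaitFree.
Hypothesis wf : wf_consensus k P.

Definition reachable (c : config) := exists inp s, c = run (c0 inp) s.

Lemma reachable_run c s : reachable c -> reachable (run c s).
Proof. by move=> [inp [q ->]]; exists inp, (q ++ s); rewrite run_cat. Qed.

Lemma reachable_exec inp sched t : reachable (exec k P inp sched t).
Proof. by exists inp, (mkseq sched t); rewrite exec_run. Qed.

Lemma solo_decides c z : reachable c ->
  exists m d, decision (run c (nseq m z)) z = Some d.
Proof.
move=> [inp [q ->]]; have [_ [_ term]] := wf inp (sched_then q (fun=> z)).
have [|t] := term z.
  move=> t; exists (size q + t); split; first exact: leq_addl.
  by rewrite /sched_then ltnNge leq_addr.
case Et: decision => [d|//] _; exists t, d.
have -> : nseq t z = mkseq (fun=> z) t.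
  apply: (@eq_from_nth _ z); rewrite ?size_mkseq ?size_nseq // => u ut.
  by rewrite nth_mkseq // nth_nseq ut.
by rewrite -run_cat -exec_sched_then (decision_exec_le (leq_addl (size q) t) Et).
Qed.

Lemma decision_agree c s x y d1 d2 : reachable c ->
  decision c x = Some d1 -> decision (run c s) y = Some d2 -> d1 = d2.
Proof.
move=> [inp [q ->]]; have [agree _] := wf inp (sched_then q (nth x s)).
move=> D1 D2; apply: (agree (size q + 0) (size q + size s) x y).
  by rewrite exec_sched_then cats0.
by rewrite exec_sched_then mkseq_nth run_cat.
Qed.

Lemma decision_valid inp s x d :
  decision (run (c0 inp) s) x = Some d -> exists j, inp j = d.
Proof.
have [_ [valid _]] := wf inp (sched_then s (fun=> x)).
by move=> D; apply: (valid (size s + 0) x); rewrite exec_sched_then cats0.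
Qed.

Definition reaches (c : config) d := exists s x, decision (run c s) x = Some d.

Definition bivalent (c : config) :=
  exists d1 d2, [/\ d1 <> d2, reaches c d1 & reaches c d2].

Lemma reaches_run c s d : reaches (run c s) d -> reaches c d.
Proof. by move=> [s' [x D]]; exists (s ++ s'), x; rewrite run_cat. Qed.

Lemma univalent c d1 d2 : ~ bivalent c -> reaches c d1 -> reaches c d2 -> d1 = d2.
Proof. by move=> nbiv R1 R2; apply: NNPP => d12; apply: nbiv; exists d1, d2. Qed.

(* [z] only witnesses that there is a process at all. *)
Lemma reaches_some c (z : 'I_n) : reachable c -> exists d, reaches c d.
Proof. by move=> /(solo_decides z)[m [d D]]; exists d, (nseq m z), z. Qed.

Lemma bivalent_undecided c x : reachable c -> bivalent c -> decision c x = None.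
Proof.
move=> rc [d1 [d2 [d12 [s1 [x1 D1]] [s2 [x2 D2]]]]].
case Ex: decision => [d|//]; case: d12.
by rewrite -(decision_agree rc Ex D1) (decision_agree rc Ex D2).
Qed.

Lemma indist_reaches X c1 c2 z : reachable c2 -> indist X c1 c2 -> ~~ X z ->
  exists2 d, reaches c1 d & reaches c2 d.
Proof.
move=> rc2 eqc Xz; have [m [d D]] := solo_decides z rc2.
exists d; last by exists (nseq m z), z.
exists (nseq m z), z; rewrite (indist_decision (indist_run eqc _) Xz) //.
by rewrite all_nseq /= Xz orbT.
Qed.

Lemma reaches_first_step c d : reachable c -> bivalent c -> reaches c d ->
  exists x, reaches (step c x) d.
Proof.
move=> rc bc [[|x s] [y D]]; last by exists x, s, y.
by rewrite /= (bivalent_undecided y rc bc) in D.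
Qed.

Lemma bivalent_initial (a b : Inp) : a <> b -> 1 < n -> exists inp, bivalent (c0 inp).
Proof.
move=> ab n_gt1; pose inp (j : nat) (x : 'I_n) := if x < j then b else a.
have reachable_init j : reachable (c0 (inp j)) by exists (inp j), [::].
apply: NNPP => none.
have univ j : ~ bivalent (c0 (inp j)) by move=> bj; apply: none; exists (inp j).
pose Qa j := reaches (c0 (inp j)) a.
have Qa0 : Qa 0.
  have [x _] := exists_neq (Ordinal n_gt1) n_gt1.
  have [d [s [y D]]] := reaches_some x (reachable_init 0).
  by have [z] := decision_valid D; rewrite /inp ltn0 => ad; exists s, y; rewrite ad.
have nQan : ~ Qa n.
  by move=> [s [y /decision_valid[x]]]; rewrite /inp ltn_ord => /esym.
have [j jn [Qaj nQaj1]] := exists_boundary Qa0 nQan.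
pose x := Ordinal jn; have [z zx] := exists_neq x n_gt1.
have eqc : indist (pred1 x) (c0 (inp j)) (c0 (inp j.+1)).
  apply: indist_init => y yx; rewrite /inp ltnS [y <= j]leq_eqVlt.
  suff /negbTE -> : (y != j :> nat) by [].
  by apply: contra yx => /eqP yj; apply/eqP/val_inj.
have [d Rj Rj1] := indist_reaches (reachable_init j.+1) eqc zx.
by apply: nQaj1; rewrite /Qa (univalent (univ j) Rj Qaj) in Rj1.
Qed.

Definition critical (c : config) :=
  [/\ reachable c, bivalent c & forall x, ~ bivalent (step c x)].

Lemma critical_exists inp : bivalent (c0 inp) -> exists c, critical c.
Proof.
move=> biv0; have [_ [_ [_ [_ [x0 _]] _]]] := biv0.
apply: NNPP => none.
pose f c := epsilon (inhabits x0) (fun x => bivalent (step c x)).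
have biv_f c : reachable c -> bivalent c -> bivalent (step c (f c)).
  move=> rc bc; apply: (epsilon_spec (inhabits x0) (fun x => bivalent (step c x))).
  apply: NNPP => nbiv; apply: none; exists c.
  by split=> // x bx; apply: nbiv; exists x.
pose g c := step c (f c); pose sched t := f (iter t g (c0 inp)).
have exec_sched t : exec k P inp sched t = iter t g (c0 inp) by elim: t => //= t ->.
have biv_t t : bivalent (iter t g (c0 inp)).
  by elim: t => //= t IH; apply: biv_f => //; rewrite -exec_sched; apply: reachable_exec.
have [z often] := infinitely_often sched.
have [_ [_ term]] := wf inp sched; have [t] := term z often.
by rewrite exec_sched bivalent_undecided // -exec_sched; apply: reachable_exec.
Qed.

Definition diverge (c : config) (i j : 'I_n) :=
  exists d1 d2, [/\ d1 <> d2, reaches (step c i) d1 & reaches (step c j) d2].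

Lemma diverge_sym c i j : diverge c i j -> diverge c j i.
Proof. by move=> [d1 [d2 [d12 R1 R2]]]; exists d2, d1; split=> // /esym. Qed.

Lemma critical_diverge c : critical c -> exists i j, diverge c i j.
Proof.
move=> [rc bc _]; have [d1 [d2 [d12 R1 R2]]] := bc.
have [i Ri] := reaches_first_step rc bc R1; have [j Rj] := reaches_first_step rc bc R2.
by exists i, j, d1, d2.
Qed.

Section Critical.
Variables (c : config) (i j : 'I_n).
Hypotheses (crit : critical c) (div : diverge c i j).

Lemma diverge_neq : i != j.
Proof.
have [_ _ univ] := crit; have [d1 [d2 [d12 R1 R2]]] := div.
by apply: contra_notN d12 => /eqP eij; rewrite eij in R1; apply: univalent (univ j) R1 R2.
Qed.

Lemma diverge_not_indist X z L1 L2 : ~~ X z ->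
  ~ indist X (run (step c i) L1) (run (step c j) L2).
Proof.
have [rc _ univ] := crit; have [d1 [d2 [d12 R1 R2]]] := div.
move=> Xz eqc; have rc2 : reachable (run (step c j) L2) := reachable_run (j :: L2) rc.
have [d Ri Rj] := indist_reaches rc2 eqc Xz.
rewrite (univalent (univ i) R1 (reaches_run Ri)) in d12.
by rewrite (univalent (univ j) R2 (reaches_run Rj)) in d12.
Qed.

Lemma diverge_write : exists o v, act i (cst c i) = AWrite o v.
Proof.
case Ei: act => [o|o v|d]; last 2 first.
- by exists o, v.
- by have [rc bc _] := crit; move: (bivalent_undecided i rc bc); rewrite /decision Ei.
have ji : ~~ pred1 i j by rewrite /= eq_sym diverge_neq.
case: (diverge_not_indist (L1 := [:: j]) (L2 := [::]) ji).
exact/indist_step/ji/(indist_step_read Ei).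
Qed.

End Critical.

Lemma critical_same_sliding c i j oi oj vi vj : critical c -> diverge c i j ->
  act i (cst c i) = AWrite oi vi -> act j (cst c j) = AWrite oj vj ->
  oi = oj /\ sliding oi.
Proof.
move=> crit div Ei Ej; have ij := diverge_neq crit div.
have [oij|oij] := eqVneq oi oj; last first.
  case: (diverge_not_indist crit div (L1 := [:: j]) (L2 := [:: i]) (isT : ~~ pred0 i)).
  exact: indist_write_comm Ei Ej.
split=> //; rewrite -{}oij in Ej; apply: contraT => so.
have ji : ~~ pred1 i j by rewrite /= eq_sym.
case: (diverge_not_indist crit div (L1 := [:: j]) (L2 := [::]) ji).
exact: indist_overwrite Ei Ej.
Qed.

Lemma critical_all_write c i j o v : critical c -> diverge c i j ->
  act i (cst c i) = AWrite o v -> forall x, exists w, act x (cst c x) = AWrite o w.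
Proof.
move=> crit div Ei x; have [rc _ _] := crit.
have [oj [vj Ej]] := diverge_write crit (diverge_sym div).
have [ooj _] := critical_same_sliding crit div Ei Ej; subst oj.
have [dx Rx] := reaches_some x (reachable_run [:: x] rc).
have [d1 [d2 [d12 R1 R2]]] := div.
case: (classic (dx = d1)) => [dx1|dx1].
  have divx : diverge c x j by exists dx, d2; split=> //; rewrite dx1.
  have [ox [w Ex]] := diverge_write crit divx.
  by have [oxo _] := critical_same_sliding crit divx Ex Ej; exists w; rewrite Ex oxo.
have divx : diverge c i x by exists d1, dx; split=> // /esym.
have [ox [w Ex]] := diverge_write crit (diverge_sym divx).
by have [oox _] := critical_same_sliding crit divx Ei Ex; exists w; rewrite Ex oox.
Qed.

Lemma critical_false c : k < n -> ~ critical c.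
Proof.
move=> kn crit; have [i [j div]] := critical_diverge crit.
have ij := diverge_neq crit div.
have [o [v Ei]] := diverge_write crit div.
have [oj [vj Ej]] := diverge_write crit (diverge_sym div).
have [_ so] := critical_same_sliding crit div Ei Ej.
have [w Ew] := fin_all_exists (critical_all_write crit div Ei).
pose others := enum [predC pred2 i j].
have ji : ~~ pred1 i j by rewrite /= eq_sym.
apply: (diverge_not_indist crit div (L1 := j :: others) (L2 := others) ji).
apply: (@indist_hidden_write c o w i (j :: others)) => //.
- by rewrite /= mem_enum !inE eqxx orbT enum_uniq.
- by rewrite inE negb_or ij mem_enum !inE eqxx.
- have := cardC (pred2 i j); rewrite card2 ij card_ord /= -cardE => card_others.
  by rewrite -ltnS -add2n card_others.
Qed.

End WaitFree.

Lemma no_wf_consensus (a b : Inp) : a <> b -> 1 < n -> k < n -> ~ wf_consensus k P.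
Proof.
move=> ab n_gt1 kn wf.
have [inp biv0] := bivalent_initial wf ab n_gt1.
have [c crit] := critical_exists wf biv0.
exact: critical_false crit.
Qed.

End Protocol.

Theorem theorem2 (k : nat) (hk : 1 <= k) (Inp : Type) (a b : Inp) (hab : a <> b)
  (P : protocol k.+1 Inp) : ~ wf_consensus k P.
Proof. exact: no_wf_consensus hab (hk : 1 < k.+1) (ltnSn k). Qed.
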